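(* Let $(P,Q)$ be a global solution of the Cucker–Smale model with velocity control described in the context. Then the following are equivalent: (1) $(P,Q)$ exhibits bi-cluster flocking; (2) there exists a partition $\{A,B\}$ of $[N]$ such that \[ \sup_{t\ge0}\max\{D_{Q,A}(t),D_{Q,B}(t)\}<\infty\quad\text{and}\quad\sup_{t\ge0}\min_{i\in A,\,j\in B}|q_i(t)-q_j(t)|=\infty. \]
   Context: Let $N\ge2$, $d\ge1$, $\kappa>0$, $[N]=\{1,\dots,N\}$. The velocity control function $G:\mathbb R^d\to\mathbb R^d$ is $G(p)=g(|p|)\,p/|p|$ for $p\ne0$, $G(0)=0$, with $g\in C^1([0,\infty))$, $g(0)=0$, $0<m\le g'\le M$ on every compact interval (constants depending on the interval), and $g$ convex or concave on $(0,\infty)$. The kernel $\psi:(0,\infty)\to(0,\infty)$ is bounded, Lipschitz continuous and nonincreasing. The model is, for $i\in[N]$, $t>0$: \[ \dot q_i=G(p_i),\qquad \dot p_i=\frac{\kappa}{N}\sum_{k=1}^N\psi(|q_k-q_i|)\big(G(p_k)-G(p_i)\big),\qquad (q_i,p_i)(0)=(q_i^0,p_i^0)\in\mathbb R^d\times\mathbb R^d. \] For $S\subset[N]$: $D_{Q,S}(t)=\max_{i,j\in S}|q_i(t)-q_j(t)|$, $D_{P,S}(t)=\max_{i,j\in S}|p_i(t)-p_j(t)|$. The solution exhibits bi-cluster flocking if there is a nonempty proper subset $S\subset[N]$ with $\sup_{t\ge0}\max\{D_{Q,S}(t),D_{Q,[N]\setminus S}(t)\}<\infty$, $\sup_{t\ge0}\min_{i\in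 S,\,j\notin S}|q_i(t)-q_j(t)|=\infty$, and $\lim_{t\to\infty}D_{P,S}(t)=\lim_{t\to\infty}D_{P,[N]\setminus S}(t)=0$. *)

From HB Require Import structures.
From mathcomp Require Import all_boot all_order all_algebra.
From mathcomp Require Import all_classical all_reals all_analysis.
Set Implicit Arguments. Unset Strict Implicit. Unset Printing Implicit Defensive.
Import Order.TTheory GRing.Theory Num.Theory.
Import numFieldNormedType.Exports.

Local Open Scope classical_set_scope.
Local Open Scope ring_scope.

Definition enorm (R : realType) (d : nat) (x : 'I_d -> R) : R :=
  Num.sqrt (\sum_(k < d) x k ^+ 2).

Definition Gctrl (R : realType) (g : R -> R) (d : nat) (p : 'I_d -> R) : 'I_d -> R :=
  fun k => if enorm p == 0 then 0 else g (enorm p) / enorm p * p k.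

Definition pdist (R : realType) (N d : nat) (x : R -> 'I_N -> 'I_d -> R)
  (i j : 'I_N) (t : R) : R := enorm (fun k => x t i k - x t j k).

Definition Ddiam (R : realType) (N d : nat) (x : R -> 'I_N -> 'I_d -> R)
  (S : {set 'I_N}) (t : R) : R :=
  \big[Order.max/0]_(i in S) \big[Order.max/0]_(j in S) pdist x i j t.

Definition convex_pos (R : realType) (g : R -> R) : Prop :=
  forall x y l : R, 0 < x -> 0 < y -> 0 <= l <= 1 ->
    g (l * x + (1 - l) * y) <= l * g x + (1 - l) * g y.
Definition concave_pos (R : realType) (g : R -> R) : Prop :=
  forall x y l : R, 0 < x -> 0 < y -> 0 <= l <= 1 ->
    l * g x + (1 - l) * g y <= g (l * x + (1 - l) * y).

Definition admissible_g (R : realType) (g : R -> R) : Prop :=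
  [/\ (forall s : R, 0 <= s -> derivable g s 1),
      {within [set s : R | 0 <= s]%classic, continuous derive1 g},
      g 0 = 0,
      (forall a : R, 0 < a -> exists m M : R, 0 < m /\
          forall s : R, 0 <= s <= a -> m <= derive1 g s <= M)
    & convex_pos g \/ concave_pos g].

(* standing assumptions on psi (on [0,oo), i.e. psi(0) is the continuous
   extension of the kernel to 0) *)
Definition admissible_psi (R : realType) (psi : R -> R) : Prop :=
  [/\ (forall r : R, 0 <= r -> 0 < psi r),
      (exists C : R, forall r : R, 0 <= r -> psi r <= C),
      (exists L : R, forall r s : R, 0 <= r -> 0 <= s ->
          `|psi r - psi s| <= L * `|r - s|)
    & (forall r s : R, 0 <= r -> r <= s -> psi s <= psi r)].

Definition CS_solution (R : realType) (N d : nat) (kappa : R) (g psi : R -> R)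
  (q p : R -> 'I_N -> 'I_d -> R) : Prop :=
  [/\ (forall i k, {within [set t : R | 0 <= t]%classic, continuous (fun t => q t i k)}),
      (forall i k, {within [set t : R | 0 <= t]%classic, continuous (fun t => p t i k)}),
      (forall (i : 'I_N) (k : 'I_d) (t : R), 0 < t ->
          derivable (fun s => q s i k) t 1 /\
          derive1 (fun s => q s i k) t = Gctrl g (p t i) k)
    & (forall (i : 'I_N) (k : 'I_d) (t : R), 0 < t ->
          derivable (fun s => p s i k) t 1 /\
          derive1 (fun s => p s i k) t =
            kappa / N%:R * \sum_(j < N) psi (pdist q j i t) *
              (Gctrl g (p t j) k - Gctrl g (p t i) k))].

Definition bicluster_flocking (R : realType) (N d : nat)
  (q p : R -> 'I_N -> 'I_d -> R) : Prop :=
  exists S : {set 'I_N}, [/\ S != finset.set0, S != [set: 'I_N]%SET,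
    ((exists C : R, forall t : R, 0 <= t ->
        Order.max (Ddiam q S t) (Ddiam q (~: S) t) <= C) /\
     (forall M : R, exists t : R, 0 <= t /\
        forall i j, i \in S -> j \notin S -> M < pdist q i j t)),
    (Ddiam p S t @[t --> +oo] --> 0)
  & (Ddiam p (~: S) t @[t --> +oo] --> 0)].

(* (1) => (2) is immediate with B the complement of S; for (2) => (1) only the
   velocity alignment inside each group is missing.  Along a solution the kinetic
   energy E = sum_i |p_i|^2 satisfies
     E' = - kappa/N sum_(i,j) psi(|q_i - q_j|) <p_i - p_j, G(p_i) - G(p_j)>,
   and G is monotone, so E is nonincreasing and the velocities stay bounded.  On a
   bounded set G is even strongly monotone since g' >= m > 0 there.  If i and j lie
   in a group of diameter at most C, then psi(|q_i - q_j|) >= psi(C), hence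
   E' <= - c |p_i - p_j|^2 with c > 0; as |p_i - p_j|^2 also has a bounded
   derivative, a Barbalat-type argument forces it to 0. *)

From HB Require Import structures.
From mathcomp Require Import all_boot all_order all_algebra.
From mathcomp Require Import all_classical all_reals all_analysis.
From mathcomp Require Import ring lra.
Set Implicit Arguments. Unset Strict Implicit. Unset Printing Implicit Defensive.
Import Order.TTheory GRing.Theory Num.Theory.
Import numFieldNormedType.Exports.
Local Open Scope classical_set_scope.
Local Open Scope ring_scope.

Definition dotv (R : realType) (d : nat) (x y : 'I_d -> R) : R :=
  \sum_(k < d) x k * y k.

Section Euclidean.
Variables (R : realType) (d : nat).
Implicit Types x y : 'I_d -> R.

Lemma dotv_ge0 x : 0 <= dotv x x.
Proof. by apply: sumr_ge0 => k _; rewrite -expr2 sqr_ge0. Qed.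

Lemma enormE x : enorm x = Num.sqrt (dotv x x).
Proof. by congr Num.sqrt; apply: eq_bigr => k _; rewrite expr2. Qed.

Lemma enorm_ge0 x : 0 <= enorm x.
Proof. exact: sqrtr_ge0. Qed.

Lemma enorm_sqr x : enorm x ^+ 2 = dotv x x.
Proof. by rewrite enormE sqr_sqrtr // dotv_ge0. Qed.

Lemma enorm_opp x : enorm (fun k => - x k) = enorm x.
Proof. by congr Num.sqrt; apply: eq_bigr => k _; rewrite sqrrN. Qed.

Lemma normr_le_enorm x k : `|x k| <= enorm x.
Proof.
rewrite -(@ler_pXn2r _ 2) ?nnegrE ?enorm_ge0 // enorm_sqr real_normK ?num_real //.
rewrite /dotv (bigD1 k) //= -expr2 lerDl.
by apply: sumr_ge0 => i _; rewrite -expr2 sqr_ge0.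
Qed.

Lemma dotv_le_enorm x y : dotv x y <= enorm x * enorm y.
Proof.
set a := enorm x; set b := enorm y; set c := dotv x y.
have [a0 b0] : 0 <= a /\ 0 <= b by rewrite !enorm_ge0.
have sq : 0 <= b ^+ 2 * dotv x x - 2 * a * b * c + a ^+ 2 * dotv y y.
  have -> : b ^+ 2 * dotv x x - 2 * a * b * c + a ^+ 2 * dotv y y =
      \sum_(k < d) (b * x k - a * y k) ^+ 2.
    rewrite /c /dotv !mulr_sumr -sumrN -!big_split /=.
    by apply: eq_bigr => k _; ring.
  by apply: sumr_ge0 => k _; rewrite sqr_ge0.
rewrite -!enorm_sqr -/a -/b in sq.
have [ab0|ab_gt0] := eqVneq (a * b) 0.
  have coord0 (z : 'I_d -> R) k : enorm z = 0 -> z k = 0.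
    by move=> z0; apply/eqP; rewrite -normr_le0 -z0 normr_le_enorm.
  rewrite ab0 /c /dotv big1 // => k _.
  by move: ab0 => /eqP; rewrite mulf_eq0 => /orP[] /eqP/(coord0 _ k) ->; rewrite ?mul0r ?mulr0.
have : 0 < a * b by rewrite lt_def ab_gt0 mulr_ge0.
nra.
Qed.

Lemma normr_dotv_le x y : `|dotv x y| <= enorm x * enorm y.
Proof.
rewrite ler_norml dotv_le_enorm andbT lerNl.
have := dotv_le_enorm (fun k => - x k) y; rewrite enorm_opp.
by rewrite /dotv -sumrN (eq_bigr _ (fun k _ => mulNr (x k) (y k))).
Qed.

Lemma normr_dotv_le_coord x y (A B : R) :
  (forall k, `|x k| <= A) -> (forall k, `|y k| <= B) -> `|dotv x y| <= d%:R * (A * B).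
Proof.
move=> xA yB; apply: le_trans (ler_norm_sum _ _ _) _.
rewrite mulr_natl -[X in _ *+ X]card_ord -sumr_const; apply: ler_sum => k _.
by rewrite normrM ler_pM.
Qed.

End Euclidean.

(* With a = |x|, b = |y|, c = <x, y>, ga = g a, gb = g b the two sides are
   m |x - y|^2 and <x - y, G x - G y>, since G x = (g a / a) x (and g a / 0 = 0). *)
Lemma radial_monotone_ineq (F : realFieldType) (a b c ga gb m : F) :
  0 <= a -> 0 <= b -> `|c| <= a * b -> m * a <= ga -> m * b <= gb ->
  m * (a - b) ^+ 2 <= (a - b) * (ga - gb) ->
  m * (a ^+ 2 - 2 * c + b ^+ 2) <=
    ga / a * a ^+ 2 - (ga / a + gb / b) * c + gb / b * b ^+ 2.
Proof.
move=> a0 b0; rewrite ler_norml => /andP[cab1 cab2] mga mgb mab.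
have sqr_div (u v : F) : v != 0 -> u / v * v ^+ 2 = u * v.
  by move=> v0; rewrite expr2 mulrA divfK.
have [a_eq0|a_neq0] := eqVneq a 0.
  subst a.
  have -> : c = 0 by move: cab1 cab2; rewrite mul0r; lra.
  rewrite expr0n /= !(mulr0, subr0, sub0r, add0r, oppr0).
  have [->|b_neq0] := eqVneq b 0; first by rewrite expr0n /= !mulr0.
  by rewrite sqr_div // expr2 mulrA ler_wpM2r.
have [b_eq0|b_neq0] := eqVneq b 0.
  subst b.
  have -> : c = 0 by move: cab1 cab2; rewrite mulr0; lra.
  rewrite expr0n /= !(mulr0, subr0, addr0).
  by rewrite sqr_div // expr2 mulrA ler_wpM2r.
have a_gt0 : 0 < a by rewrite lt_def a_neq0.
have b_gt0 : 0 < b by rewrite lt_def b_neq0.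
have mha : m <= ga / a by rewrite ler_pdivlMr.
have mhb : m <= gb / b by rewrite ler_pdivlMr.
rewrite -subr_ge0.
have -> : ga / a * a ^+ 2 - (ga / a + gb / b) * c + gb / b * b ^+ 2
    - m * (a ^+ 2 - 2 * c + b ^+ 2) =
  (ga / a + gb / b - 2 * m) * (a * b - c) +
  ((a - b) * (ga / a * a - gb / b * b) - m * (a - b) ^+ 2) by ring.
rewrite !divfK // addr_ge0 ?subr_ge0 //.
by apply: mulr_ge0; lra.
Qed.

Section VelocityControl.
Variables (R : realType) (g : R -> R) (d : nat).
Implicit Types x y : 'I_d -> R.

(* The case split in [Gctrl] is absorbed by the convention [u / 0 = 0]. *)
Lemma GctrlE x k : Gctrl g x k = g (enorm x) / enorm x * x k.
Proof. by rewrite /Gctrl; case: eqP => [->|//]; rewrite invr0 mulr0 mul0r. Qed.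

Lemma Gctrl_strongly_monotone (m Rb : R) x y :
  g 0 = 0 ->
  (forall a b : R, 0 <= a <= Rb -> 0 <= b <= Rb ->
     m * (a - b) ^+ 2 <= (a - b) * (g a - g b)) ->
  enorm x <= Rb -> enorm y <= Rb ->
  m * dotv (fun k => x k - y k) (fun k => x k - y k) <=
    dotv (fun k => x k - y k) (fun k => Gctrl g x k - Gctrl g y k).
Proof.
move=> g0 gmono xR yR.
set a := enorm x; set b := enorm y; set c := dotv x y.
have [a0 b0] : 0 <= a /\ 0 <= b by rewrite !enorm_ge0.
have gm (u : R) : 0 <= u <= Rb -> m * u <= g u.
  move=> uR; have := gmono u 0 uR; rewrite lexx (le_trans a0 xR) => /(_ isT).
  rewrite g0 !subr0 expr2 mulrA [u * g u]mulrC.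
  have [->|u_neq0] := eqVneq u 0; first by rewrite !mulr0 g0.
  by rewrite ler_pM2r // lt_def u_neq0; case/andP: uR.
have -> : dotv (fun k => x k - y k) (fun k => x k - y k) = a ^+ 2 - 2 * c + b ^+ 2.
  rewrite /a /b !enorm_sqr /c /dotv !mulr_sumr -sumrN -!big_split /=.
  by apply: eq_bigr => k _; ring.
have -> : dotv (fun k => x k - y k) (fun k => Gctrl g x k - Gctrl g y k) =
    g a / a * a ^+ 2 - (g a / a + g b / b) * c + g b / b * b ^+ 2.
  rewrite /a /b !enorm_sqr /c /dotv !mulr_sumr -sumrN -!big_split /=.
  by apply: eq_bigr => k _; rewrite !GctrlE; ring.
apply: radial_monotone_ineq => //; first exact: normr_dotv_le.
- by apply: gm; rewrite a0.
- by apply: gm; rewrite b0.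
- by apply: gmono; rewrite ?a0 ?b0.
Qed.

End VelocityControl.

Section RealDerivatives.
Variable R : realType.
Implicit Types (f : R -> R) (x y D : R).

Lemma MVT_derivable f x y : x <= y ->
  (forall s, x <= s <= y -> derivable f s 1) ->
  exists2 c, x <= c <= y & f y - f x = derive1 f c * (y - x).
Proof.
move=> xy df.
have df' s : s \in `]x, y[ -> is_derive s 1 f (derive1 f s).
  rewrite in_itv /= => /andP[xs sy].
  by rewrite derive1E; apply/derivableP/df; rewrite !ltW.
have cf : {within `[x, y], continuous f}.
  apply: continuous_in_subspaceT => s; rewrite inE /= in_itv /= => sxy.
  exact/differentiable_continuous/derivable1_diffP/df.
by have [c] := MVT_segment xy df' cf; rewrite in_itv /=; exists c.
Qed.

Lemma derive1_le_increment f x y D : x <= y ->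
  (forall s, x <= s <= y -> derivable f s 1) ->
  (forall s, x <= s <= y -> derive1 f s <= D) -> f y - f x <= D * (y - x).
Proof.
move=> xy df dfD; have [c cxy ->] := MVT_derivable xy df.
by rewrite ler_wpM2r ?subr_ge0 ?dfD.
Qed.

Lemma derive1_ge_increment f x y D : x <= y ->
  (forall s, x <= s <= y -> derivable f s 1) ->
  (forall s, x <= s <= y -> D <= derive1 f s) -> D * (y - x) <= f y - f x.
Proof.
move=> xy df dfD; have [c cxy ->] := MVT_derivable xy df.
by rewrite ler_wpM2r ?subr_ge0 ?dfD.
Qed.

Lemma derive1_le0_le f a x y :
  (forall t, a < t -> derivable f t 1) -> (forall t, a < t -> derive1 f t <= 0) ->
  a < x -> x <= y -> f y <= f x.
Proof.
move=> df df_le0 ax xy; rewrite -subr_le0.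
apply: le_trans (derive1_le_increment (D := 0) xy _ _) _; last by rewrite mul0r.
- by move=> s /andP[xs _]; apply: df; apply: lt_le_trans xs.
- by move=> s /andP[xs _]; apply: df_le0; apply: lt_le_trans xs.
Qed.

Lemma is_derive_derive1 f (t df : R) :
  is_derive t 1 f df -> derivable f t 1 /\ derive1 f t = df.
Proof. by move=> f_df; rewrite derive1E; split; [exact: ex_derive | exact: derive_val]. Qed.

End RealDerivatives.

Section AdmissibleG.
Variables (R : realType) (g : R -> R).
Hypothesis hg : admissible_g g.

Lemma admissible_g_strongly_monotone (Rb : R) : 0 < Rb ->
  exists2 m : R, 0 < m & forall a b : R, 0 <= a <= Rb -> 0 <= b <= Rb ->
    m * (a - b) ^+ 2 <= (a - b) * (g a - g b).
Proof.
case: hg => dg _ _ dg_bnd _ Rb_gt0.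
have [m [M [m_gt0 mM]]] := dg_bnd Rb Rb_gt0.
exists m => // a b.
have swap u v : (m * (u - v) ^+ 2 <= (u - v) * (g u - g v)) =
    (m * (v - u) ^+ 2 <= (v - u) * (g v - g u)) by congr (_ <= _); ring.
wlog ab : a b / a <= b => [wlog_ab aR bR|/andP[a0 aR] /andP[b0 bR]].
  have [|ba] := leP a b; first by move=> ab; exact: wlog_ab.
  by rewrite swap; exact: wlog_ab (ltW ba) bR aR.
rewrite swap expr2 mulrA [m * _]mulrC -mulrA.
apply: ler_wpM2l; first by rewrite subr_ge0.
apply: derive1_ge_increment => // s /andP[a_s sb].
- by apply: dg; apply: le_trans a_s.
- by have /andP[] := mM s ltac:(by rewrite (le_trans a0 a_s) (le_trans sb bR)).
Qed.

Lemma admissible_g_nondecreasing (a b : R) : 0 <= a -> a <= b -> g a <= g b.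
Proof.
move=> a0; rewrite le_eqVlt => /predU1P[-> //|ab].
have Rb_gt0 : 0 < b + 1 by lra.
have [m m_gt0 gmono] := admissible_g_strongly_monotone Rb_gt0.
have := gmono a b ltac:(apply/andP; lra) ltac:(apply/andP; lra).
rewrite (_ : (a - b) * _ = (b - a) * (g b - g a)); last by ring.
move=> /(le_trans (mulr_ge0 (ltW m_gt0) (sqr_ge0 (a - b)))).
by rewrite pmulr_rge0 ?subr_gt0 // subr_ge0.
Qed.

Lemma admissible_g_ge0 (a : R) : 0 <= a -> 0 <= g a.
Proof. by move=> a0; case: hg => _ _ <- _ _; apply: admissible_g_nondecreasing. Qed.

Lemma Gctrl_monotone (d : nat) (x y : 'I_d -> R) :
  0 <= dotv (fun k => x k - y k) (fun k => Gctrl g x k - Gctrl g y k).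
Proof.
have Rb_gt0 : 0 < enorm x + enorm y + 1 by have := enorm_ge0 x; have := enorm_ge0 y; lra.
have [m m_gt0 gmono] := admissible_g_strongly_monotone Rb_gt0.
apply: le_trans (Gctrl_strongly_monotone _ gmono _ _); last 3 first.
- by case: hg.
- by have := enorm_ge0 y; lra.
- by have := enorm_ge0 x; lra.
by rewrite mulr_ge0 ?dotv_ge0 ?ltW.
Qed.

Lemma normr_Gctrl_le (d : nat) (x : 'I_d -> R) (Rb : R) k :
  enorm x <= Rb -> `|Gctrl g x k| <= g Rb.
Proof.
move=> xR; have x0 := enorm_ge0 x.
rewrite GctrlE normrM ger0_norm ?divr_ge0 ?admissible_g_ge0 //.
apply: le_trans (admissible_g_nondecreasing x0 xR).
have [->|x_neq0] := eqVneq (enorm x) 0.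
  by rewrite invr0 mulr0 mul0r admissible_g_ge0.
rewrite -[leRHS](divfK x_neq0) ler_wpM2l ?normr_le_enorm //.
by rewrite divr_ge0 ?admissible_g_ge0.
Qed.

End AdmissibleG.

Section Dissipation.
Variables (R : realType) (L f : R -> R) (a c K : R).
Hypotheses (c_gt0 : 0 < c)
  (dL : forall t, a < t -> derivable L t 1)
  (dL_le : forall t, a < t -> derive1 L t <= - (c * f t))
  (L_ge0 : forall t, a < t -> 0 <= L t)
  (f_ge0 : forall t, a < t -> 0 <= f t)
  (df : forall t, a < t -> derivable f t 1)
  (df_bnd : forall t, a < t -> `|derive1 f t| <= K).

Let dL_le0 t : a < t -> derive1 L t <= 0.
Proof.
by move=> at_; apply: le_trans (dL_le at_) _; rewrite oppr_le0 mulr_ge0 ?(ltW c_gt0) ?f_ge0.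
Qed.

(* If f >= e at arbitrarily late times, the bound on f' keeps f >= e/2 on a window
   of fixed length after each of them, so L drops by a fixed amount infinitely often
   and eventually becomes negative. *)
Lemma dissipation_cvg0 (e : R) : 0 < e -> \forall t \near +oo, f t < e.
Proof.
move=> e_gt0; apply: contrapT => f_large.
have large_after T : exists2 s, T <= s & e <= f s.
  apply: contrapT => no_s; apply: f_large; exists T; split; first exact: num_real.
  move=> s Ts; rewrite ltNge; apply/negP => fs; apply: no_s.
  by exists s => //; apply: ltW.
set K' := `|K| + 1; have K'_gt0 : 0 < K' by rewrite ltr_pwDr.
set dt := e / (2 * K'); have dt_gt0 : 0 < dt by rewrite divr_gt0 ?mulr_gt0.
have e2_gt0 : 0 < e / 2 by rewrite divr_gt0.
set eta := c * (e / 2) * dt.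
have eta_gt0 : 0 < eta by rewrite /eta; apply: mulr_gt0 => //; apply: mulr_gt0.
have K'dt : K' * dt = e / 2 by rewrite /dt; field; rewrite gt_eqF.
have f_window s u : a < s -> e <= f s -> s <= u <= s + dt -> e / 2 <= f u.
  move=> a_s fs /andP[su us].
  have sub_a w : s <= w -> a < w by apply: lt_le_trans.
  have df_ge w : s <= w <= u -> - K' <= derive1 f w.
    case/andP=> sw _; have := df_bnd (sub_a w sw); rewrite ler_norml => /andP[+ _].
    by apply: le_trans; rewrite lerN2 (le_trans (ler_norm K)) ?lerDl.
  have := derive1_ge_increment su (fun w wsu => df (sub_a w (proj1 (andP wsu)))) df_ge.
  have : K' * (u - s) <= K' * dt by apply: ler_wpM2l; [exact: ltW | lra].
  lra.
have L_drop s : a < s -> e <= f s -> L (s + dt) <= L s - eta.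
  move=> a_s fs; have s_dt : s <= s + dt by rewrite lerDl ltW.
  have sub_a w : s <= w -> a < w by apply: lt_le_trans.
  have dL_drop w : s <= w <= s + dt -> derive1 L w <= - (c * (e / 2)).
    move=> /andP[sw wdt]; apply: le_trans (dL_le (sub_a w sw)) _.
    by rewrite lerN2 ler_pM2l // (f_window s) ?sw.
  have := derive1_le_increment s_dt (fun w wsdt => dL (sub_a w (proj1 (andP wsdt)))) dL_drop.
  by rewrite addrAC subrr add0r mulNr -/eta; lra.
have L_unbounded n : exists2 t, a + 1 <= t & L t <= L (a + 1) - n%:R * eta.
  elim: n => [|n [t at_ Lt]]; first by exists (a + 1); rewrite ?mul0r ?subr0.
  have [s ts fs] := large_after t; have a_s : a < s by lra.
  exists (s + dt); first by have := ltW dt_gt0; lra.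
  have := L_drop s a_s fs; have := derive1_le0_le dL dL_le0 (ltac:(lra) : a < t) ts.
  rewrite -natr1; lra.
have := archi_boundP (divr_ge0 (L_ge0 (ltr_pwDr ltr01 (lexx a))) (ltW eta_gt0)).
rewrite ltr_pdivrMr // => Ln.
have [t at_ Lt] := L_unbounded (Num.Def.archi_bound (L (a + 1) / eta)).
by have := L_ge0 (t := t) ltac:(lra); lra.
Qed.
End Dissipation.

Lemma is_derive_dotv_self (R : realType) (d : nat) (x : R -> 'I_d -> R)
    (dx : 'I_d -> R) (t : R) :
  (forall k, is_derive t 1 (fun s => x s k) (dx k)) ->
  is_derive t 1 (fun s => dotv (x s) (x s)) (2 * dotv (x t) dx).
Proof.
move=> x_dx.
have -> : (fun s => dotv (x s) (x s)) = \sum_(k < d) ((fun s => x s k) * (fun s => x s k)).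
  by apply/funext => s; rewrite fct_sumE.
apply: (is_derive_eq (is_derive_sum (fun k => is_deriveM (x_dx k) (x_dx k)))).
rewrite /dotv mulr_sumr; apply: eq_bigr => k _.
by rewrite /GRing.scale /=; ring.
Qed.

Lemma sum_dotv_symmetrize (R : realType) (N d : nat) (w : 'I_N -> 'I_N -> R)
    (x y : 'I_N -> 'I_d -> R) :
  (forall i j, w i j = w j i) ->
  \sum_(i < N) 2 * dotv (x i) (fun k => \sum_(j < N) w j i * (y j k - y i k)) =
  - \sum_(i < N) \sum_(j < N) w j i *
      dotv (fun k => x i k - x j k) (fun k => y i k - y j k).
Proof.
move=> w_sym.
set T := \sum_(i < N) \sum_(j < N) w j i * dotv (x i) (fun k => y j k - y i k).
have inner i : dotv (x i) (fun k => \sum_(j < N) w j i * (y j k - y i k)) =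
    \sum_(j < N) w j i * dotv (x i) (fun k => y j k - y i k).
  rewrite /dotv; under eq_bigr do rewrite mulr_sumr.
  rewrite exchange_big /=; apply: eq_bigr => j _; rewrite mulr_sumr.
  by apply: eq_bigr => k _; ring.
rewrite (eq_bigr _ (fun i _ => congr1 (GRing.mul 2) (inner i))).
rewrite -mulr_sumr mulr_natl mulr2n.
have swap : T = \sum_(i < N) \sum_(j < N) w j i * dotv (x j) (fun k => y i k - y j k).
  by rewrite /T exchange_big; apply: eq_bigr => i _; apply: eq_bigr => j _; rewrite w_sym.
rewrite -/T {2}swap /T -big_split -sumrN; apply: eq_bigr => i _.
rewrite -big_split -sumrN; apply: eq_bigr => j _ /=.
rewrite -mulrDr -mulrN /dotv -sumrN -big_split; congr (_ * _).
by apply: eq_bigr => k _ /=; ring.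
Qed.

Section Configurations.
Variables (R : realType) (N d : nat) (x : R -> 'I_N -> 'I_d -> R).

Lemma pdistC i j t : pdist x i j t = pdist x j i t.
Proof. by rewrite /pdist -enorm_opp; congr enorm; apply/funext => k; rewrite opprB. Qed.

Lemma pdist_ge0 i j t : 0 <= pdist x i j t.
Proof. exact: enorm_ge0. Qed.

Lemma pdist_le_Ddiam (S : {set 'I_N}) i j t :
  i \in S -> j \in S -> pdist x i j t <= Ddiam x S t.
Proof.
move=> iS jS; apply: le_trans (le_bigmax_cond _ _ iS).
exact: (le_bigmax_cond _ (fun j => pdist x i j t) jS).
Qed.

Lemma Ddiam_ge0 (S : {set 'I_N}) t : 0 <= Ddiam x S t.
Proof. exact: bigmax_ge_id. Qed.

End Configurations.

Section CuckerSmale.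
Variables (R : realType) (N d : nat) (kappa : R) (g psi : R -> R)
  (q p : R -> 'I_N -> 'I_d -> R).
Hypotheses (N_gt0 : (0 < N)%N) (kappa_gt0 : 0 < kappa)
  (hg : admissible_g g) (hpsi : admissible_psi psi) (sol : CS_solution kappa g psi q p).
Implicit Types (t : R) (i j : 'I_N) (k : 'I_d).

Let kN := kappa / N%:R.
Let kN_gt0 : 0 < kN. Proof. by rewrite divr_gt0 ?ltr0n. Qed.
Let G t i := Gctrl g (p t i).
Let weight t i j := psi (pdist q j i t).

Let weight_gt0 t i j : 0 < weight t i j.
Proof. by case: hpsi => psi_gt0 _ _ _; apply/psi_gt0/pdist_ge0. Qed.

Definition alignment_force t i k := kN * \sum_(j < N) weight t i j * (G t j k - G t i k).

Lemma is_derive_velocity t i k : 0 < t ->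
  is_derive t 1 (fun s => p s i k) (alignment_force t i k).
Proof.
case: sol => _ _ _ dp t_gt0; have [dpi dpE] := dp i k t t_gt0.
by rewrite /alignment_force /kN /weight /G -dpE derive1E; apply: derivableP.
Qed.

Definition kinetic_energy t := \sum_(i < N) dotv (p t i) (p t i).

Definition energy_dissipation t := kN * \sum_(i < N) \sum_(j < N)
  weight t i j * dotv (fun k => p t i k - p t j k) (fun k => G t i k - G t j k).

Lemma is_derive_kinetic_energy t : 0 < t ->
  is_derive t 1 kinetic_energy (- energy_dissipation t).
Proof.
move=> t_gt0.
have -> : kinetic_energy = \sum_(i < N) (fun s => dotv (p s i) (p s i)).
  by apply/funext => s; rewrite fct_sumE.
apply: (is_derive_eq (is_derive_sum
  (fun i => is_derive_dotv_self (is_derive_velocity i ^~ t_gt0)))).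
rewrite /energy_dissipation -mulrN -sum_dotv_symmetrize; last first.
  by move=> i j; rewrite /weight pdistC.
rewrite mulr_sumr; apply: eq_bigr => i _.
rewrite /alignment_force /dotv mulrCA mulr_sumr [in RHS]mulr_sumr [in RHS]mulr_sumr.
by apply: eq_bigr => k _; ring.
Qed.

Let dissipation_term_ge0 t i j : 0 <= weight t i j *
    dotv (fun k => p t i k - p t j k) (fun k => G t i k - G t j k).
Proof. by rewrite mulr_ge0 ?Gctrl_monotone ?ltW ?weight_gt0. Qed.

Lemma energy_dissipation_ge_pair t i j :
  kN * (weight t i j * dotv (fun k => p t i k - p t j k) (fun k => G t i k - G t j k))
    <= energy_dissipation t.
Proof.
apply: ler_wpM2l; first exact: ltW.
rewrite (bigD1 i) //= (bigD1 j) //= -addrA lerDl.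
apply: addr_ge0; first by apply: sumr_ge0 => j' _; apply: dissipation_term_ge0.
by apply: sumr_ge0 => i' _; apply: sumr_ge0 => j' _; apply: dissipation_term_ge0.
Qed.

Lemma kinetic_energy_nonincreasing (x y : R) : 0 < x -> x <= y ->
  kinetic_energy y <= kinetic_energy x.
Proof.
have dE t : 0 < t -> derivable kinetic_energy t 1 /\
    derive1 kinetic_energy t = - energy_dissipation t.
  by move=> t_gt0; apply/is_derive_derive1/is_derive_kinetic_energy.
apply: derive1_le0_le => [t /dE[] // | t /dE[_ ->]].
rewrite oppr_le0; apply: mulr_ge0; first exact: ltW.
by apply: sumr_ge0 => i _; apply: sumr_ge0 => j _; apply: dissipation_term_ge0.
Qed.

(* The solution is only known to be differentiable for t > 0, so the bounds start at t = 1. *)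
Lemma velocity_bounded : exists2 Rb : R, 0 < Rb &
  forall t i, 1 <= t -> enorm (p t i) <= Rb.
Proof.
exists (Num.sqrt (kinetic_energy 1) + 1); first by rewrite ltr_pwDr ?sqrtr_ge0.
move=> t i t_ge1; have E_le : dotv (p t i) (p t i) <= kinetic_energy 1.
  apply: le_trans (kinetic_energy_nonincreasing ltr01 t_ge1).
  by rewrite /kinetic_energy (bigD1 i) //= lerDl sumr_ge0 // => j _; apply: dotv_ge0.
by rewrite enormE (le_trans (ler_wsqrtr E_le)) // lerDl.
Qed.

Lemma alignment_force_bounded : exists B : R,
  forall t i k, 1 <= t -> `|alignment_force t i k| <= B.
Proof.
have [Rb _ p_bnd] := velocity_bounded.
case: hpsi => _ [C psi_le] _ _.
exists (kN * (N%:R * (C * (g Rb + g Rb)))) => t i k t_ge1.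
rewrite normrM gtr0_norm //; apply: ler_wpM2l; first exact: ltW.
rewrite (le_trans (ler_norm_sum _ _ _)) // mulr_natl -[X in _ *+ X]card_ord -sumr_const.
apply: ler_sum => j _; rewrite normrM gtr0_norm ?weight_gt0 //.
apply: ler_pM => //; [exact: ltW | exact: psi_le (pdist_ge0 _ _ _ _) |].
apply: le_trans (ler_normB _ _) _.
by rewrite lerD ?normr_Gctrl_le ?p_bnd.
Qed.

Lemma cluster_velocity_pair_cvg0 (S : {set 'I_N}) (C : R) a b :
  (forall t, 0 <= t -> Ddiam q S t <= C) -> a \in S -> b \in S ->
  forall e : R, 0 < e -> \forall t \near +oo,
    dotv (fun k => p t a k - p t b k) (fun k => p t a k - p t b k) < e.
Proof.
move=> S_bnd aS bS.
have [Rb Rb_gt0 p_bnd] := velocity_bounded.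
have [B F_bnd] := alignment_force_bounded.
have [m m_gt0 G_mono] := admissible_g_strongly_monotone hg Rb_gt0.
have C_ge0 : 0 <= C := le_trans (Ddiam_ge0 _ _ _) (S_bnd 0 (lexx 0)).
case: hpsi => psi_gt0 _ _ psi_noninc.
set dp := fun t k => p t a k - p t b k.
set f := fun t => dotv (dp t) (dp t).
have df t : 0 < t -> is_derive t 1 f
    (2 * dotv (dp t) (fun k => alignment_force t a k - alignment_force t b k)).
  move=> t_gt0; apply: is_derive_dotv_self => k.
  by apply: is_deriveB; apply: is_derive_velocity.
have dE t : 0 < t -> is_derive t 1 kinetic_energy (- energy_dissipation t).
  exact: is_derive_kinetic_energy.
apply: (@dissipation_cvg0 R kinetic_energy f 1 (kN * (psi C * m))
  (2 * (d%:R * ((Rb + Rb) * (B + B))))).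
- by rewrite mulr_gt0 // mulr_gt0 // psi_gt0.
- by move=> t t_gt1; have [] := is_derive_derive1 (dE t (lt_trans ltr01 t_gt1)).
- move=> t t_gt1; have t_gt0 := lt_trans ltr01 t_gt1.
  have [_ ->] := is_derive_derive1 (dE t t_gt0); rewrite lerN2.
  apply: le_trans (energy_dissipation_ge_pair t a b).
  have w_ge : psi C <= weight t a b.
    apply: psi_noninc; first exact: pdist_ge0.
    by apply: le_trans (S_bnd t (ltW t_gt0)); apply: pdist_le_Ddiam.
  have Dot_ge : m * f t <=
      dotv (fun k => p t a k - p t b k) (fun k => G t a k - G t b k).
    apply: (Gctrl_strongly_monotone _ G_mono); last 2 first.
    - by apply: p_bnd; apply: ltW.
    - by apply: p_bnd; apply: ltW.
    by case: hg.
  rewrite -mulrA; apply: ler_wpM2l; first exact: ltW.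
  rewrite -mulrA; apply: ler_pM w_ge Dot_ge; first exact: ltW (psi_gt0 _ C_ge0).
  exact: mulr_ge0 (ltW m_gt0) (dotv_ge0 _).
- by move=> t _; apply: sumr_ge0 => i _; apply: dotv_ge0.
- by move=> t _; apply: dotv_ge0.
- by move=> t t_gt1; have [] := is_derive_derive1 (df t (lt_trans ltr01 t_gt1)).
- move=> t t_gt1; have [_ ->] := is_derive_derive1 (df t (lt_trans ltr01 t_gt1)).
  rewrite normrM ger0_norm //; apply: ler_wpM2l => //.
  apply: normr_dotv_le_coord => k; apply: le_trans (ler_normB _ _) _; apply: lerD.
  + exact: le_trans (normr_le_enorm _ k) (p_bnd _ _ (ltW t_gt1)).
  + exact: le_trans (normr_le_enorm _ k) (p_bnd _ _ (ltW t_gt1)).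
  + exact: F_bnd (ltW t_gt1).
  + exact: F_bnd (ltW t_gt1).
Qed.

Lemma cluster_velocity_alignment (S : {set 'I_N}) (C : R) :
  (forall t, 0 <= t -> Ddiam q S t <= C) -> Ddiam p S t @[t --> +oo] --> 0.
Proof.
move=> S_bnd; apply/cvgrPdist_lt => e e_gt0.
have pair_near (ij : 'I_N * 'I_N) : \forall t \near +oo,
    ij.1 \in S -> ij.2 \in S -> pdist p ij.1 ij.2 t < e.
  case: ij => i j /=.
  have [iS|iS] := boolP (i \in S); last exact: filterE.
  have [jS|jS] := boolP (j \in S); last exact: filterE.
  apply: filterS (cluster_velocity_pair_cvg0 S_bnd iS jS (exprn_gt0 2 e_gt0)) => t dt _ _.
  by rewrite /pdist enormE -(ger0_norm (ltW e_gt0)) -sqrtr_sqr ltr_sqrt // exprn_gt0.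
apply: filterS (filter_forall _ pair_near) => t pairs_lt.
rewrite sub0r normrN ger0_norm ?Ddiam_ge0 //.
apply: bigmax_lt => // i iS; apply: bigmax_lt => // j jS.
exact: (pairs_lt (i, j)).
Qed.

End CuckerSmale.

Lemma setUI_partition_setC (T : finType) (A B : {set T}) :
  A :|: B = [set: T]%SET -> A :&: B = finset.set0 -> B = ~: A.
Proof.
move=> AUB AIB; apply/finset.setP => x.
move/finset.setP/(_ x): AUB; move/finset.setP/(_ x): AIB.
by rewrite !inE; case: (x \in A); case: (x \in B).
Qed.

Theorem proposition2p2 (R : realType) (N d : nat) (kappa : R) (g psi : R -> R)
  (q p : R -> 'I_N -> 'I_d -> R) :
  (2 <= N)%N -> (1 <= d)%N -> 0 < kappa ->
  admissible_g g -> admissible_psi psi ->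
  CS_solution kappa g psi q p ->
  (bicluster_flocking q p <->
   exists A B : {set 'I_N},
     [/\ A :|: B = [set: 'I_N]%SET, A :&: B = finset.set0, A != finset.set0 /\ B != finset.set0,
         (exists C : R, forall t : R, 0 <= t ->
            Order.max (Ddiam q A t) (Ddiam q B t) <= C)
       & (forall M : R, exists t : R, 0 <= t /\
            forall i j, i \in A -> j \in B -> M < pdist q i j t)]).
Proof.
move=> N_ge2 _ kappa_gt0 hg hpsi sol; have N_gt0 : (0 < N)%N by apply: leq_trans N_ge2.
split=> [[S [S0 ST [[C S_bnd] S_sep] _ _]] | [A [B [AUB AIB [A0 B0] [C AB_bnd] AB_sep]]]].
  exists S, (~: S); split; [exact: finset.setUCr | exact: finset.setICr | | by exists C |].
    by split=> //; apply: contraNneq ST => SC0; rewrite -(finset.setCK S) SC0 finset.setC0.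
  move=> M; have [t [t_ge0 sep]] := S_sep M.
  by exists t; split=> // i j iS; rewrite finset.in_setC; apply: sep.
have B_eq := setUI_partition_setC AUB AIB; subst B.
have [A_bnd Ac_bnd] : (forall t, 0 <= t -> Ddiam q A t <= C) /\
    (forall t, 0 <= t -> Ddiam q (~: A) t <= C).
  by split=> t t_ge0; apply: le_trans (AB_bnd t t_ge0); rewrite le_max lexx ?orbT.
exists A; split=> //.
- by apply: contraNneq B0 => ->; rewrite finset.setCT.
- split; first by exists C.
  move=> M; have [t [t_ge0 sep]] := AB_sep M.
  by exists t; split=> // i j iA jA; apply: sep; rewrite ?finset.in_setC.
- exact: cluster_velocity_alignment N_gt0 kappa_gt0 hg hpsi sol _ _ A_bnd.
- exact: cluster_velocity_alignment N_gt0 kappa_gt0 hg hpsi sol _ _ Ac_bnd.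
Qed.
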